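(* For any $A\subset\Omega$, if $\phi\in F_A$ then $\phi_\pi\in F_A$.
   Context: Let $\mathcal H$ be a complex Hilbert space. A projection is a bounded self-adjoint idempotent operator; $\wedge_\alpha p_\alpha$ is the projection onto the intersection of ranges. Let $S$ be a set; for each $t\in S$ let $\Gamma(t)$ be a countable set and for $a\in\Gamma(t)$ let $p^t_a$ be a projection on $\mathcal H$ with $\sum_{a\in\Gamma(t)}p^t_a=I$ (strong convergence). Let $\pi=\{p^t_a\}$ and $p^{t_1,\dots,t_k}_{a_1,\dots,a_k}=\wedge_{i=1}^kp^{t_i}_{a_i}$. $\pi$ commutes on $\phi$ if $W\phi=V\phi$ whenever $W,V$ are finite products of elements of $\pi$ with the same factors (with multiplicity) in possibly different orders; $\mathcal H_\pi$ is the closed subspace of such $\phi$, $p_\pi$ its projection, $\phi_\pi=p_\pi\phi$. Let $\Omega=\prod_{t\in S}\Gamma(t)$. For $A\subset\Omega$, $F_A=\{\phi\in\mathcal H:$ for every $\omega\in A$ there are $t_1,\dots,t_k\in S$ with $p^{t_1,\dots,t_k}_{\omega_{t_1},\dots,\omega_{t_k}}\phi=0\}$. *)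

From Stdlib Require Import List Permutation ClassicalEpsilon.
From mathcomp Require Import all_boot all_order all_algebra.
From mathcomp Require Import reals complex.
Set Implicit Arguments. Unset Strict Implicit. Unset Printing Implicit Defensive.
Import Order.TTheory GRing.Theory Num.Theory.
Local Open Scope ring_scope.

Section Hilbert.
Variable R : realType.
Local Notation C := (R[i]).
Variable V : lmodType C.
Variable ip : V -> V -> C.  (* inner product, linear in the first argument *)

(* norm induced by the inner product (a nonnegative real, viewed in C) *)
Definition hnorm (x : V) : C := sqrtC (ip x x).

Definition cauchy_seq (u : nat -> V) : Prop :=
  forall eps : C, 0 < eps -> exists N : nat,
    forall m n : nat, (N <= m)%N -> (N <= n)%N -> hnorm (u m - u n) < eps.

Definition converges_to (u : nat -> V) (l : V) : Prop :=
  forall eps : C, 0 < eps -> exists N : nat,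
    forall n : nat, (N <= n)%N -> hnorm (u n - l) < eps.

Definition is_hilbert : Prop :=
  [/\ (forall x y, ip y x = (ip x y)^*),
      (forall (a : C) x y z, ip (a *: x + y) z = a * ip x z + ip y z),
      (forall x, 0 <= ip x x),
      (forall x, ip x x = 0 -> x = 0) &
      (forall u, cauchy_seq u -> exists l, converges_to u l)].

Definition linear_op (T : V -> V) : Prop :=
  forall (a : C) x y, T (a *: x + y) = a *: T x + T y.

Definition bounded_op (T : V -> V) : Prop :=
  linear_op T /\ exists M : C, forall x, hnorm (T x) <= M * hnorm x.

Definition is_projection (P : V -> V) : Prop :=
  [/\ bounded_op P, (forall x y, ip (P x) y = ip x (P y)) & (forall x, P (P x) = P x)].

Definition orthproj (M : V -> Prop) (phi : V) : V :=
  epsilon (inhabits 0)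
    (fun psi => M psi /\ forall chi, M chi -> ip (phi - psi) chi = 0).

Definition range (T : V -> V) : V -> Prop := fun y => exists x, T x = y.

Definition meetproj (ps : list (V -> V)) : V -> V :=
  orthproj (fun y => forall q, In q ps -> range q y).

Definition lsum (l : list V) : V := fold_right (fun a b => a + b) 0 l.

Variable S : Type.
Variable Gamma : S -> Type.
Variable p : forall t : S, Gamma t -> V -> V.

Definition countable_type (X : Type) : Prop := exists f : X -> nat, injective f.

(* sum_{a in Gamma t} p^t_a = I, strong (unconditional) convergence *)
Definition sums_to_identity (t : S) : Prop :=
  forall (phi : V) (eps : C), 0 < eps -> exists l0 : list (Gamma t),
    forall l : list (Gamma t), NoDup l -> incl l0 l ->
      hnorm (phi - lsum (map (fun a => p a phi) l)) < eps.

Definition word_prod (w : list {t : S & Gamma t}) : V -> V :=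
  fold_right (fun i f => fun x => p (projT2 i) (f x)) (fun x => x) w.

Definition commutes_on (phi : V) : Prop :=
  forall w v : list {t : S & Gamma t}, Permutation w v ->
    word_prod w phi = word_prod v phi.

Definition H_pi : V -> Prop := commutes_on.

Definition phi_pi (phi : V) : V := orthproj H_pi phi.

Definition Omega := forall t : S, Gamma t.

Definition F_set (A : Omega -> Prop) : V -> Prop := fun phi =>
  forall omega : Omega, A omega ->
    exists ts : list S, ts <> nil /\
      meetproj (map (fun t => p (omega t)) ts) phi = 0.

End Hilbert.

From Pilot Require Import Defs.
From Stdlib Require Import List Permutation ClassicalEpsilon.
From mathcomp Require Import all_boot all_order all_algebra.
From mathcomp Require Import reals complex classical_sets lra.
Set Implicit Arguments. Unset Strict Implicit. Unset Printing Implicit Defensive.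
Import Order.TTheory GRing.Theory Num.Theory.
Local Open Scope ring_scope.

(* Let P be the orthogonal projection onto H_pi.  Since H_pi is invariant
   under every p^t_a and p^t_a is self-adjoint, P commutes with p^t_a; hence
   P maps the intersection M of the ranges of p^{t_1}_{a_1}, ..., p^{t_k}_{a_k}
   into itself.  As P is self-adjoint, phi orthogonal to M then gives
   <P phi, m> = <phi, P m> = 0 for m in M, i.e. the projection of P phi onto
   M vanishes.  The projections involved exist by the Hilbert projection
   theorem: a minimizing sequence for the distance to a closed subspace is
   Cauchy by the parallelogram law, and its limit is the orthogonal
   projection. *)

Definition inv_succ {R : realType} (n : nat) : R := n.+1%:R^-1.

Lemma inv_succ_gt0 (R : realType) n : 0 < (inv_succ n : R).
Proof. by rewrite /inv_succ invr_gt0 ltr0Sn. Qed.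

Lemma inv_succ_le (R : realType) m n : (m <= n)%N -> (inv_succ n : R) <= inv_succ m.
Proof. by move=> le_mn; rewrite /inv_succ lef_pV2 ?posrE ?ltr0Sn // ler_nat ltnS. Qed.

Lemma inv_succ_lt (R : realType) (e : R) : 0 < e -> exists N, (inv_succ N : R) < e.
Proof.
move=> e0; exists (Num.truncn e^-1); set N := Num.truncn _.
rewrite /inv_succ -[e]invrK ltf_pV2 ?posrE ?invr_gt0 ?ltr0Sn //.
exact: truncnS_gt.
Qed.

Lemma Re_realM (R : realType) (r : R) (z : R[i]) :
  complex.Re (real_complex R r * z) = r * complex.Re z.
Proof. by case: z => a b /=; rewrite mul0r subr0. Qed.

Lemma Re_conj (R : realType) (z : R[i]) : complex.Re z^* = complex.Re z.
Proof. by case: z. Qed.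

Lemma conj_real (R : realType) (r : R) : (real_complex R r)^* = real_complex R r.
Proof. exact: conjc_real. Qed.

Lemma complex_eq0 (R : realType) (z : R[i]) :
  complex.Re z = 0 -> complex.Im z = 0 -> z = 0.
Proof. by case: z => a b /= -> ->. Qed.

Section InnerProductSpace.
Variable R : realType.
Local Notation C := R[i].
Local Notation toC := (real_complex R).
Variables (V : lmodType C) (ip : V -> V -> C).

Definition is_inner_product : Prop :=
  [/\ (forall x y, ip y x = (ip x y)^*),
      (forall (a : C) x y z, ip (a *: x + y) z = a * ip x z + ip y z),
      (forall x, 0 <= ip x x) &
      (forall x, ip x x = 0 -> x = 0)].

Definition complete_ip : Prop :=
  forall u, cauchy_seq ip u -> exists l, converges_to ip u l.

Lemma inner_product_complete_of_hilbert : is_hilbert ip -> is_inner_product /\ complete_ip.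
Proof. by case. Qed.

Definition sqnorm (x : V) : R := complex.Re (ip x x).

Definition contraction (T : V -> V) : Prop := forall x, sqnorm (T x) <= sqnorm x.

Definition closed_subspace (K : V -> Prop) : Prop :=
  [/\ K 0, (forall a x y, K x -> K y -> K (a *: x + y)) &
      (forall u l, (forall n, K (u n)) -> converges_to ip u l -> K l)].

Hypothesis ipP : is_inner_product.

Lemma ipC x y : ip y x = (ip x y)^*.
Proof. by case: ipP. Qed.

Lemma ipDZl (a : C) x y z : ip (a *: x + y) z = a * ip x z + ip y z.
Proof. by case: ipP. Qed.

Lemma ip_self_ge0 x : 0 <= ip x x.
Proof. by case: ipP. Qed.

Lemma ip_self_eq0 x : ip x x = 0 -> x = 0.
Proof. by case: ipP => _ _ _; apply. Qed.

Lemma ip0l z : ip 0 z = 0.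
Proof.
have := ipDZl 1 0 0 z; rewrite scale1r addr0 mul1r => h.
by apply: (addrI (ip 0 z)); rewrite addr0 -h.
Qed.

Lemma ipDl x y z : ip (x + y) z = ip x z + ip y z.
Proof. by have := ipDZl 1 x y z; rewrite scale1r mul1r. Qed.

Lemma ipZl a x z : ip (a *: x) z = a * ip x z.
Proof. by have := ipDZl a x 0 z; rewrite addr0 ip0l addr0. Qed.

Lemma ipNl x z : ip (- x) z = - ip x z.
Proof. by rewrite -scaleN1r ipZl mulN1r. Qed.

Lemma ipBl x y z : ip (x - y) z = ip x z - ip y z.
Proof. by rewrite ipDl ipNl. Qed.

Lemma ipDr x y z : ip z (x + y) = ip z x + ip z y.
Proof. by rewrite [LHS]ipC ipDl rmorphD (ipC x z) (ipC y z). Qed.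

Lemma ipZr a x z : ip z (a *: x) = a^* * ip z x.
Proof. by rewrite [LHS]ipC ipZl rmorphM (ipC x z). Qed.

Lemma ip0r z : ip z 0 = 0.
Proof. by rewrite ipC ip0l rmorph0. Qed.

Lemma ipNr x z : ip z (- x) = - ip z x.
Proof. by rewrite [LHS]ipC ipNl rmorphN (ipC x z). Qed.

Lemma Re_ipC x y : complex.Re (ip y x) = complex.Re (ip x y).
Proof. by rewrite ipC Re_conj. Qed.

Lemma ip_self x : ip x x = toC (sqnorm x).
Proof. by rewrite /sqnorm; have := ger0_Im (ip_self_ge0 x); case: (ip x x) => a b /= ->. Qed.

Lemma sqnorm_ge0 x : 0 <= sqnorm x.
Proof. by rewrite -ler0c -ip_self ip_self_ge0. Qed.

Lemma sqnorm_eq0 x : sqnorm x = 0 -> x = 0.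
Proof. by move=> x0; apply: ip_self_eq0; rewrite ip_self x0. Qed.

Lemma sqnorm_lin (r : R) x y :
  sqnorm (toC r *: x + y) = r ^+ 2 * sqnorm x + 2 * r * complex.Re (ip x y) + sqnorm y.
Proof.
rewrite /sqnorm ipDl !ipDr !ipZl !ipZr conj_real !raddfD /= !Re_realM Re_ipC.
rewrite -/(sqnorm x) -/(sqnorm y); lra.
Qed.

Lemma sqnormD x y : sqnorm (x + y) = sqnorm x + 2 * complex.Re (ip x y) + sqnorm y.
Proof. by have := sqnorm_lin 1 x y; rewrite rmorph1 scale1r => ->; lra. Qed.

Lemma sqnormN x : sqnorm (- x) = sqnorm x.
Proof. by rewrite /sqnorm ipNl ipNr opprK. Qed.

Lemma sqnormZ (r : R) x : sqnorm (toC r *: x) = r ^+ 2 * sqnorm x.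
Proof.
have := sqnorm_lin r x 0; rewrite addr0 ip0r raddf0 => ->.
by rewrite /sqnorm ip0l raddf0; lra.
Qed.

Lemma parallelogram x y :
  sqnorm (x + y) + sqnorm (x - y) = 2 * sqnorm x + 2 * sqnorm y.
Proof. by rewrite !sqnormD ipNr raddfN sqnormN; lra. Qed.

Lemma Re_ip_le (s : R) x y : 0 < s ->
  s * (2 * complex.Re (ip x y)) <= s ^+ 2 * sqnorm x + sqnorm y.
Proof.
by move=> s0; have := sqnorm_ge0 (toC (- s) *: x + y); rewrite sqnorm_lin sqrrN; lra.
Qed.

Lemma sqnormB_le x y : sqnorm (x - y) <= 2 * sqnorm x + 2 * sqnorm y.
Proof. by have := parallelogram x y; have := sqnorm_ge0 (x + y); lra. Qed.

Lemma sqnormD_le_small x y (d e : R) : 0 < e <= 1 -> 0 <= d ->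
  sqnorm x <= d + e -> sqnorm y <= e ^+ 2 -> sqnorm (x + y) <= d + e * (d + 4).
Proof.
move=> /andP[e0 e1] d0 x_le y_le.
have Re_le := Re_ip_le x y e0; have y0 := sqnorm_ge0 y.
rewrite sqnormD -(ler_pM2l e0).
have p1 : e * (1 + e) * sqnorm x <= e * (1 + e) * (d + e).
  by rewrite ler_wpM2l // mulr_ge0 //; lra.
have p2 : (1 + e) * sqnorm y <= (1 + e) * e ^+ 2 by rewrite ler_wpM2l //; lra.
have p3 : 0 <= e ^+ 2 * (1 - e) by rewrite mulr_ge0 ?sqr_ge0 //; lra.
lra.
Qed.

Lemma hnorm_lt x (s : R) : 0 < s -> (hnorm ip x < toC s) = (sqnorm x < s ^+ 2).
Proof.
move=> s0; rewrite /hnorm ip_self.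
have -> : toC s = sqrtC (toC (s ^+ 2)) by rewrite rmorphXn sqrCK // ler0c ltW.
by rewrite ltr_sqrtC ?nnegrE ?ler0c ?sqnorm_ge0 ?exprn_ge0 ?ltW // ltcR.
Qed.

Lemma cvg_sqnorm u l : converges_to ip u l ->
  forall e : R, 0 < e -> exists N, forall n, (N <= n)%N -> sqnorm (u n - l) < e.
Proof.
move=> ul e e0; have se0 : 0 < Num.sqrt e by rewrite sqrtr_gt0.
have [N hN] := ul (toC (Num.sqrt e)) (etrans (ltcR _ _) se0).
by exists N => n /hN; rewrite hnorm_lt // sqr_sqrtr // ltW.
Qed.

Lemma cauchy_seq_sqnorm u :
  (forall e : R, 0 < e -> exists N, forall m n, (N <= m)%N -> (N <= n)%N ->
     sqnorm (u m - u n) < e) -> cauchy_seq ip u.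
Proof.
move=> uC eps; case: eps => s b; rewrite ltcE /= => /andP[/eqP -> s0].
have [N hN] := uC (s ^+ 2) (exprn_gt0 _ s0).
by exists N => m n hm hn; rewrite (hnorm_lt _ s0); apply: hN.
Qed.

Lemma sqnorm_sub_lim_le y (d : R) u l : 0 <= d ->
  (forall n, sqnorm (y - u n) < d + inv_succ n) -> converges_to ip u l ->
  sqnorm (y - l) <= d.
Proof.
move=> d0 u_lt ul; apply/ler_addgt0Pr => e e0.
pose eps := e / (d + e + 4).
have eps0 : 0 < eps by rewrite divr_gt0 //; lra.
have eps_e : eps * (d + e + 4) = e by rewrite divfK //; apply: lt0r_neq0; lra.
have eps1 : eps <= 1 by rewrite ler_pdivrMr ?mul1r; lra.
have [N1 hN1] := inv_succ_lt eps0.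
have [N2 hN2] := cvg_sqnorm ul (exprn_gt0 2 eps0).
pose n := maxn N1 N2.
have -> : y - l = (y - u n) + (u n - l) by rewrite addrA subrK.
apply: le_trans (sqnormD_le_small (x := y - u n) (e := eps) _ d0 _ _) _.
- by rewrite eps0 eps1.
- have := u_lt n; have := inv_succ_le R (leq_maxl N1 N2); lra.
- exact/ltW/hN2/leq_maxr.
- have : eps * e >= 0 by rewrite mulr_ge0 // ltW.
  lra.
Qed.

(* With a := Re <c, z> and b := sqnorm c, minimality at r = - a / (b + 1)
   reads 0 <= - r ^+ 2 * (b + 2), whence r = 0 and a = 0. *)
Lemma Re_ip_eq0_of_min z c :
  (forall r : R, sqnorm z <= sqnorm (toC r *: c + z)) -> complex.Re (ip c z) = 0.
Proof.
move=> zmin; set a := complex.Re _; set b := sqnorm c.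
have b0 : 0 <= b := sqnorm_ge0 c.
pose r := - a / (b + 1).
have hr : r * (b + 1) = - a by rewrite divfK //; apply: lt0r_neq0; lra.
have := zmin r; rewrite sqnorm_lin -/a -/b => h.
have p1 : r * (r * (b + 1)) = r * (- a) by rewrite hr.
have p2 : 0 <= r ^+ 2 * b by rewrite mulr_ge0 // sqr_ge0.
have r2 : r ^+ 2 = 0 by apply/le_anti; rewrite sqr_ge0 andbT; lra.
have r0 : r = 0 by apply/eqP; move/eqP: r2; rewrite expf_eq0 => /andP[].
by apply: oppr_inj; rewrite -hr r0 mul0r oppr0.
Qed.

Lemma linear_opB (T : V -> V) : linear_op T -> forall x y, T (x - y) = T x - T y.
Proof. by move=> T_lin x y; rewrite -scaleN1r addrC T_lin scaleN1r addrC. Qed.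

Lemma linear_op0 (T : V -> V) : linear_op T -> T 0 = 0.
Proof. by move=> T_lin; have := linear_opB T_lin 0 0; rewrite !subrr. Qed.

Lemma eq_at_lim (T1 T2 : V -> V) : linear_op T1 -> linear_op T2 ->
  contraction T1 -> contraction T2 ->
  forall u l, (forall n, T1 (u n) = T2 (u n)) -> converges_to ip u l -> T1 l = T2 l.
Proof.
move=> lin1 lin2 c1 c2 u l eq_u ul.
apply/eqP; rewrite -subr_eq0; apply/eqP/sqnorm_eq0/le_anti.
rewrite sqnorm_ge0 andbT; apply/ler_addgt0Pr => e e0.
have e4 : 0 < e / 4 by lra.
have [N hN] := cvg_sqnorm ul e4.
have -> : T1 l - T2 l = T1 (l - u N) - T2 (l - u N).
  by rewrite (linear_opB lin1) (linear_opB lin2) eq_u opprB addrA subrK.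
have := hN N (leqnn N); rewrite -sqnormN opprB.
have := sqnormB_le (T1 (l - u N)) (T2 (l - u N)).
have := c1 (l - u N); have := c2 (l - u N); lra.
Qed.

Lemma projection_contraction q : is_projection ip q -> contraction q.
Proof.
case=> [[q_lin _] q_sym q_idem] x.
have -> : sqnorm x = sqnorm (q x + (x - q x)) by rewrite addrC subrK.
rewrite sqnormD q_sym (linear_opB q_lin) q_idem subrr ip0r raddf0.
by have := sqnorm_ge0 (x - q x); lra.
Qed.

Lemma projection_rangeP q y : is_projection ip q -> Defs.range q y <-> q y = y.
Proof. by case=> _ _ q_idem; split=> [[x <-]|qy]; [rewrite q_idem | exists y]. Qed.

Lemma closed_subspace_meet (qs : seq (V -> V)) :
  (forall q, In q qs -> is_projection ip q) ->
  closed_subspace (fun y => forall q, In q qs -> Defs.range q y).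
Proof.
move=> qs_proj; have q_lin q : In q qs -> linear_op q by case/qs_proj => [[]].
have fixP q z : In q qs -> Defs.range q z <-> q z = z.
  by move=> qq; apply: projection_rangeP (qs_proj q qq).
split=> [q qq | a x y Mx My q qq | u l Mu ul q qq]; apply/(fixP q _ qq).
- exact: linear_op0 (q_lin q qq).
- by rewrite q_lin // ((fixP q x qq).1 (Mx q qq)) ((fixP q y qq).1 (My q qq)).
- apply: (eq_at_lim (q_lin q qq) (fun a x y => erefl) _ (fun x => le_refl _) _ ul).
  + exact: projection_contraction (qs_proj q qq).
  + by move=> n; apply/(fixP q _ qq)/Mu.
Qed.

Section Projection.
Hypothesis ip_complete : complete_ip.
Variable K : V -> Prop.
Hypothesis hK : closed_subspace K.

Let K0 : K 0. Proof. by case: hK. Qed.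

Let Klin a x y : K x -> K y -> K (a *: x + y). Proof. by case: hK => _ + _; apply. Qed.

Let KZ a x : K x -> K (a *: x).
Proof. by move=> Kx; rewrite -[_ *: x]addr0; apply: Klin. Qed.

(* The midpoint of two points of K is in K and its distance to phi is at
   least d, so the parallelogram law bounds the distance between them. *)
Lemma minimizing_cauchy phi (d : R) ks :
  (forall c, K c -> d <= sqnorm (phi - c)) -> (forall n, K (ks n)) ->
  (forall n, sqnorm (phi - ks n) < d + inv_succ n) -> cauchy_seq ip ks.
Proof.
move=> d_le Kks ks_lt.
have ks_close m n : sqnorm (ks m - ks n) <= 2 * inv_succ m + 2 * inv_succ n.
  pose mid := toC 2^-1 *: ks m + toC 2^-1 *: ks n.
  have Kmid : K mid by apply: Klin => //; apply: KZ.
  have sum_mid : (phi - ks m) + (phi - ks n) = toC 2 *: (phi - mid).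
    rewrite scalerBr scalerDr !scalerA -rmorphM mulfV ?pnatr_eq0 //.
    rewrite rmorph1 !scale1r (_ : toC 2 = 2%:R) ?rmorph_nat // scaler_nat.
    by rewrite mulr2n opprD addrACA.
  have diff_ks : (phi - ks m) - (phi - ks n) = - (ks m - ks n).
    by rewrite opprB addrC addrA subrK opprB.
  have := parallelogram (phi - ks m) (phi - ks n).
  rewrite sum_mid diff_ks sqnormZ sqnormN.
  have := d_le _ Kmid; have := ks_lt m; have := ks_lt n; lra.
apply: cauchy_seq_sqnorm => e e0.
have [N hN] := inv_succ_lt (ltac:(lra) : 0 < e / 4).
exists N => m n hm hn; have := ks_close m n.
have := inv_succ_le R hm; have := inv_succ_le R hn; lra.
Qed.

Lemma best_approx_exists phi :
  exists2 k, K k & forall c, K c -> sqnorm (phi - k) <= sqnorm (phi - c).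
Proof.
pose D : set R := fun r => exists2 c, K c & sqnorm (phi - c) = r.
have D0 : D (sqnorm (phi - 0)) by exists 0.
have Dlb : has_lbound D by exists 0 => _ [c _ <-]; apply: sqnorm_ge0.
pose d := inf D.
have d_le c : K c -> d <= sqnorm (phi - c) by move=> Kc; apply: (ge_inf Dlb); exists c.
have d0 : 0 <= d.
  by apply: lb_le_inf; [exists (sqnorm (phi - 0)) | move=> _ [c _ <-]; apply: sqnorm_ge0].
have near_inf n : exists c, K c /\ sqnorm (phi - c) < d + inv_succ n.
  have [_ [c Kc <-] lt_c] := inf_adherent (inv_succ_gt0 R n) (conj (ex_intro _ _ D0) Dlb).
  by exists c.
have [ks /all_and2[Kks ks_lt]] := choice _ near_inf.
have [k ks_k] := ip_complete (minimizing_cauchy d_le Kks ks_lt).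
exists k; first by case: hK => _ _; apply; [apply: Kks | apply: ks_k].
by move=> c Kc; apply: le_trans (d_le c Kc); apply: sqnorm_sub_lim_le ks_k.
Qed.

Lemma orthogonal_of_best_approx phi k : K k ->
  (forall c, K c -> sqnorm (phi - k) <= sqnorm (phi - c)) ->
  forall c, K c -> ip (phi - k) c = 0.
Proof.
move=> Kk kmin.
have Re0 c : K c -> complex.Re (ip c (phi - k)) = 0.
  move=> Kc; apply: Re_ip_eq0_of_min => r.
  have -> : toC r *: c + (phi - k) = phi - (toC (- r) *: c + k).
    by rewrite rmorphN scaleNr opprD opprK addrCA.
  by apply: kmin; apply: Klin.
move=> c Kc; rewrite ipC (complex_eq0 (Re0 _ Kc)) ?rmorph0 //.
have := Re0 _ (KZ 'i%C Kc); rewrite ipZl mulrC ReiNIm.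
by move/eqP; rewrite oppr_eq0 => /eqP.
Qed.

Lemma orthproj_spec phi :
  K (orthproj ip K phi) /\ forall c, K c -> ip (phi - orthproj ip K phi) c = 0.
Proof.
have [k Kk kmin] := best_approx_exists phi.
apply: (epsilon_spec _ (fun psi => K psi /\ _)).
by exists k; split=> //; apply: orthogonal_of_best_approx.
Qed.

Lemma orthproj_eq phi psi : K psi ->
  (forall c, K c -> ip (phi - psi) c = 0) -> orthproj ip K phi = psi.
Proof.
move=> Kpsi psi_orth; have [KP P_orth] := orthproj_spec phi.
set P := orthproj ip K phi in KP P_orth *.
have Kdiff : K (P - psi) by rewrite -scaleN1r addrC; apply: Klin.
have diffE : P - psi = (phi - psi) - (phi - P).
  by rewrite opprB [RHS]addrC addrA subrK.
apply/eqP; rewrite -subr_eq0; apply/eqP/ip_self_eq0.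
by rewrite [X in ip X _]diffE ipBl psi_orth // P_orth // subrr.
Qed.

Lemma orthproj_eq0P x : orthproj ip K x = 0 <-> forall c, K c -> ip x c = 0.
Proof.
split=> [Px0 | x_orth]; last by apply: orthproj_eq => // c; rewrite subr0; apply: x_orth.
by have [_] := orthproj_spec x; rewrite Px0 subr0.
Qed.

Lemma orthproj_sym x y : ip (orthproj ip K x) y = ip x (orthproj ip K y).
Proof.
have [KPx Px_orth] := orthproj_spec x; have [KPy Py_orth] := orthproj_spec y.
rewrite -[in LHS](subrK (orthproj ip K y) y) -[in RHS](subrK (orthproj ip K x) x).
by rewrite ipDr ipDl ipC Py_orth // Px_orth // rmorph0 !add0r.
Qed.

Lemma orthproj_comm q : linear_op q -> (forall x y, ip (q x) y = ip x (q y)) ->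
  (forall x, K x -> K (q x)) -> forall x, orthproj ip K (q x) = q (orthproj ip K x).
Proof.
move=> q_lin q_sym qK x; have [KPx Px_orth] := orthproj_spec x.
apply: orthproj_eq => [|c Kc]; first exact: qK.
by rewrite -(linear_opB q_lin) q_sym Px_orth //; apply: qK.
Qed.

End Projection.

Lemma orthproj_eq0_stable K M : complete_ip -> closed_subspace K -> closed_subspace M ->
  (forall y, M y -> M (orthproj ip K y)) ->
  forall x, orthproj ip M x = 0 -> orthproj ip M (orthproj ip K x) = 0.
Proof.
move=> ip_complete hK hM MK x /(orthproj_eq0P ip_complete hM) x_orth.
apply/(orthproj_eq0P ip_complete hM) => m Mm.
by rewrite (orthproj_sym ip_complete hK) x_orth //; apply: MK.
Qed.

Section CommutingPart.
Variables (S : Type) (Gamma : S -> Type) (p : forall t : S, Gamma t -> V -> V).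
Hypothesis p_proj : forall t (a : Gamma t), is_projection ip (p a).

Lemma word_prod_cat w v x : word_prod p (w ++ v) x = word_prod p w (word_prod p v x).
Proof. by elim: w => [|i w IH] //=; rewrite IH. Qed.

Lemma word_prod_linear w : linear_op (word_prod p w).
Proof.
elim: w => [|i w IH] a x y //=.
by have [[p_lin _] _ _] := p_proj (projT2 i); rewrite IH p_lin.
Qed.

Lemma word_prod_contraction w : contraction (word_prod p w).
Proof.
elim: w => [|i w IH] x //=.
exact: le_trans (projection_contraction (p_proj (projT2 i)) _) (IH x).
Qed.

Lemma closed_subspace_H_pi : closed_subspace (H_pi p).
Proof.
split=> [w v _ | a x y Hx Hy w v wv | u l Hu ul w v wv].
- by rewrite !(linear_op0 (word_prod_linear _)).
- by rewrite !word_prod_linear (Hx w v wv) (Hy w v wv).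
- exact: (eq_at_lim (word_prod_linear w) (word_prod_linear v)
    (word_prod_contraction w) (word_prod_contraction v) (fun n => Hu n w v wv) ul).
Qed.

Lemma H_pi_stable t (a : Gamma t) y : H_pi p y -> H_pi p (p a y).
Proof.
move=> Hy w v wv.
have := Hy (w ++ [:: existT _ t a]) (v ++ [:: existT _ t a]) (Permutation_app_tail _ wv).
by rewrite !word_prod_cat.
Qed.

Lemma phi_pi_comm t (a : Gamma t) x : complete_ip -> phi_pi ip p (p a x) = p a (phi_pi ip p x).
Proof.
move=> ip_complete; have [[p_lin _] p_sym _] := p_proj a.
apply: (orthproj_comm ip_complete closed_subspace_H_pi p_lin p_sym).
exact: H_pi_stable.
Qed.

End CommutingPart.

End InnerProductSpace.

Theorem lemma1 (R : realType) (V : lmodType R[i]) (ip : V -> V -> R[i])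
  (Hhil : is_hilbert ip)
  (S : Type) (Gamma : S -> Type) (p : forall t : S, Gamma t -> V -> V)
  (Hcount : forall t, countable_type (Gamma t))
  (Hproj : forall t (a : Gamma t), is_projection ip (p t a))
  (Hsum : forall t, sums_to_identity ip p t)
  (A : Omega Gamma -> Prop) (phi : V) :
  F_set ip p A phi -> F_set ip p A (phi_pi ip p phi).
Proof.
have [ipP ip_complete] := inner_product_complete_of_hilbert Hhil.
move=> hF omega /hF [ts [ts_nil meet0]]; exists ts; split=> //.
set qs := map _ ts in meet0 *.
have qs_proj q : In q qs -> is_projection ip q by case/in_map_iff => t [<- _].
apply: (orthproj_eq0_stable ipP ip_complete (closed_subspace_H_pi ipP Hproj)
  (closed_subspace_meet ipP qs_proj) _ meet0) => y My q qq.
have [t [qt _]] := (in_map_iff _ _ _).1 qq; rewrite -{}qt in qq *.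
apply/(projection_rangeP _ (Hproj t (omega t))).
rewrite -phi_pi_comm //; congr (phi_pi ip p).
exact/(projection_rangeP _ (Hproj t (omega t)))/My.
Qed.
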